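(* Let $c>0$, $f_s>0$, let $M,N,K\ge1$ be integers, $T_{\max}=(N-1)/f_s$, $\bm{r}^{\mathrm{mic}}_1,\dots,\bm{r}^{\mathrm{mic}}_M\in\mathbb{R}^3$ with $E_M=\{\bm{r}^{\mathrm{mic}}_m\}$, and $\bm{x}=(x_{m,n})_{1\le m\le M,0\le n\le N-1}\in\mathbb{R}^{MN}$. Let $\lambda>0$ and let $\kappa:\mathbb{R}\to\mathbb{R}$ be continuous and bounded with $\kappa(0)>0$. Define $$\phi=\inf_{t>0}\sum_{n=0}^{N-1}\frac{\kappa(n/f_s)\,\kappa(n/f_s-t)}{4\pi ct},\qquad\mu_m=\sum_{n=0}^{N-1}x_{m,n}\kappa(n/f_s)\quad(1\le m\le M).$$ Then the problem $$\inf_{(\bm{a},\bm{r})\in\mathbb{R}_+^K\times\mathscr{C}^K}\ \frac12\Big\|\bm{x}-\sum_{k=1}^K a_k\gamma(\bm{r}_k)\Big\|_2^2+\lambda\sum_{k=1}^K a_k$$ has at least one solution whenever one of the following holds: (i) $\phi<0$ and $\mu_m\le\frac{\phi}{2\lambda}\|\bm{x}\|_2^2$ for all $m\in\{1,\dots,M\}$; (ii) $\phi\ge0$ and $\mu_m\le0$ for all $m\in\{1,\dots,M\}$.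
   Context: $\mathbb{R}_+=[0,+\infty)$, $\|\cdot\|_2$ Euclidean norm. For $\bm{r}\in\mathbb{R}^3\setminus E_M$, $\gamma(\bm{r})\in\mathbb{R}^{MN}$ with $\gamma_{m,n}(\bm{r})=\dfrac{\kappa\big(n/f_s-\|\bm{r}-\bm{r}^{\mathrm{mic}}_m\|_2/c\big)}{4\pi\|\bm{r}-\bm{r}^{\mathrm{mic}}_m\|_2}$. $\mathscr{C}=\bigcap_{m=1}^M\overline{B(\bm{r}^{\mathrm{mic}}_m,cT_{\max})}\setminus E_M$ (closed Euclidean balls). *)

From Stdlib Require Import Reals Lra.
From Coquelicot Require Import Coquelicot.
Open Scope R_scope.

Fixpoint rsum (n : nat) (f : nat -> R) : R :=
  match n with O => 0 | S k => rsum k f + f k end.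

Definition pt3 := (R * R * R)%type.

Definition dist3 (r s : pt3) : R :=
  let '(r1, r2, r3) := r in let '(s1, s2, s3) := s in
  sqrt ((r1 - s1)^2 + (r2 - s2)^2 + (r3 - s3)^2).

(* gamma_{m,n}(r) (microphones / time samples indexed from 0) *)
Definition gamma (kappa : R -> R) (c fs : R) (mic : nat -> pt3)
    (r : pt3) (m n : nat) : R :=
  kappa (INR n / fs - dist3 r (mic m) / c) / (4 * PI * dist3 r (mic m)).

Definition in_EM (M : nat) (mic : nat -> pt3) (r : pt3) : Prop :=
  exists m, (m < M)%nat /\ r = mic m.

Definition inC (c fs : R) (M N : nat) (mic : nat -> pt3) (r : pt3) : Prop :=
  (forall m, (m < M)%nat -> dist3 r (mic m) <= c * (INR (N - 1) / fs)) /\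
  ~ in_EM M mic r.

Definition objective (kappa : R -> R) (c fs lambda : R) (M N K : nat)
    (mic : nat -> pt3) (x : nat -> nat -> R)
    (a : nat -> R) (r : nat -> pt3) : R :=
  / 2 * rsum M (fun m => rsum N (fun n =>
          (x m n - rsum K (fun k => a k * gamma kappa c fs mic (r k) m n)) ^ 2))
  + lambda * rsum K a.

Definition feasible (c fs : R) (M N K : nat) (mic : nat -> pt3)
    (a : nat -> R) (r : nat -> pt3) : Prop :=
  forall k, (k < K)%nat -> 0 <= a k /\ inC c fs M N mic (r k).

Definition is_solution (kappa : R -> R) (c fs lambda : R) (M N K : nat)
    (mic : nat -> pt3) (x : nat -> nat -> R) (a : nat -> R) (r : nat -> pt3) : Prop :=
  feasible c fs M N K mic a r /\
  forall a' r', feasible c fs M N K mic a' r' ->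
    objective kappa c fs lambda M N K mic x a r
      <= objective kappa c fs lambda M N K mic x a' r'.

(* phi = inf_{t>0} sum_n kappa(n/fs) kappa(n/fs - t) / (4 pi c t)  (finite under
   the hypotheses on kappa; we take the real part of the Rbar infimum) *)
Definition phi_val (kappa : R -> R) (c fs : R) (N : nat) : R :=
  real (Glb_Rbar (fun y => exists t, 0 < t /\
     y = rsum N (fun n => kappa (INR n / fs) * kappa (INR n / fs - t) / (4 * PI * c * t)))).

Definition mu (kappa : R -> R) (fs : R) (N : nat) (x : nat -> nat -> R) (m : nat) : R :=
  rsum N (fun n => x m n * kappa (INR n / fs)).

Definition sqnorm_x (M N : nat) (x : nat -> nat -> R) : R :=
  rsum M (fun m => rsum N (fun n => x m n ^ 2)).

From Stdlib Require Import Reals Lra Lia.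
From Coquelicot Require Import Coquelicot.
From HB Require Import structures.
From mathcomp Require all_boot all_order all_algebra all_classical all_reals topology
  normedtype derive Rstruct Rstruct_topology.
Open Scope R_scope.

(* A minimizing sequence may push an atom of vanishing amplitude onto a microphone, where
   [gamma] blows up. We therefore relax the problem: besides a_k and r_k, every atom carries
   weights b_km, standing for a_k / |r_k - mic_m|, in terms of which the signal is continuous
   even at the microphones. On the points doing at least as well as a = 0, the amplitudes are
   bounded by |x|^2 / (2 lambda), and so are the weights: the sample n = 0 of an atom close to
   a microphone is positive and proportional to its weight, while the data fit bounds it.
   The relaxed objective thus attains its minimum on a compact box (Tychonoff). A relaxed
   minimizer is a genuine feasible point plus "ghost" atoms of zero amplitude sitting on
   microphones, each adding a nonnegative multiple of the sampled kernel kappa(n/fs) to one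
   channel. Removing them does not increase the objective, because the remaining residual has
   correlation at most mu_m - phi * sum_k a_k with that kernel, and (i) or (ii) together with
   sum_k a_k <= |x|^2 / (2 lambda) makes this nonpositive. *)

(** * Finite sums and distances *)

Lemma rsum_ext n f g : (forall i, (i < n)%nat -> f i = g i) -> rsum n f = rsum n g.
Proof.
  induction n as [|n IH]; intros H; cbn [rsum]; [reflexivity|].
  rewrite IH, H; [reflexivity|lia|intros; apply H; lia].
Qed.

Lemma rsum_plus n f g : rsum n (fun i => f i + g i) = rsum n f + rsum n g.
Proof. induction n as [|n IH]; cbn [rsum]; [lra|]. rewrite IH; ring. Qed.

Lemma rsum_minus n f g : rsum n (fun i => f i - g i) = rsum n f - rsum n g.
Proof. induction n as [|n IH]; cbn [rsum]; [lra|]. rewrite IH; ring. Qed.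

Lemma rsum_mult_l n a f : rsum n (fun i => a * f i) = a * rsum n f.
Proof. induction n as [|n IH]; cbn [rsum]; [lra|]. rewrite IH; ring. Qed.

Lemma rsum_mult_r n a f : rsum n (fun i => f i * a) = rsum n f * a.
Proof. induction n as [|n IH]; cbn [rsum]; [lra|]. rewrite IH; ring. Qed.

Lemma rsum_const n a : rsum n (fun _ => a) = INR n * a.
Proof. induction n as [|n IH]; cbn [rsum]; [simpl; ring|]. rewrite IH, S_INR; ring. Qed.

Lemma rsum_le n f g : (forall i, (i < n)%nat -> f i <= g i) -> rsum n f <= rsum n g.
Proof.
  induction n as [|n IH]; intros H; cbn [rsum]; [lra|].
  apply Rplus_le_compat; [apply IH; intros; apply H|apply H]; lia.
Qed.

Lemma rsum_nonneg n f : (forall i, (i < n)%nat -> 0 <= f i) -> 0 <= rsum n f.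
Proof.
  intros H. rewrite <- (Rmult_0_r (INR n)), <- rsum_const. now apply rsum_le.
Qed.

Lemma rsum_eq_0 n f : (forall i, (i < n)%nat -> f i = 0) -> rsum n f = 0.
Proof.
  intros H. rewrite (rsum_ext n f (fun _ => 0)), rsum_const by exact H. ring.
Qed.

Lemma rsum_term_le n f j :
  (forall i, (i < n)%nat -> 0 <= f i) -> (j < n)%nat -> f j <= rsum n f.
Proof.
  induction n as [|n IH]; intros H Hj; cbn [rsum]; [lia|].
  destruct (Nat.eq_dec j n) as [->|Hne].
  - pose proof (rsum_nonneg n f (fun i Hi => H i ltac:(lia))). lra.
  - pose proof (IH (fun i Hi => H i ltac:(lia)) ltac:(lia)).
    pose proof (H n ltac:(lia)). lra.
Qed.

Lemma rsum_term_le_shift n f j L : 0 <= L ->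
  (forall i, (i < n)%nat -> - L <= f i) -> (j < n)%nat -> f j <= rsum n f + INR n * L.
Proof.
  intros HL H Hj.
  assert (Hj' : f j + L <= rsum n (fun i => f i + L)).
  { apply (rsum_term_le n (fun i => f i + L)); [|exact Hj].
    intros i Hi; specialize (H i Hi); lra. }
  replace (rsum n (fun i => f i + L)) with (rsum n f + INR n * L) in Hj'
    by (rewrite rsum_plus, rsum_const; reflexivity).
  lra.
Qed.

Lemma rsum_swap n m (f : nat -> nat -> R) :
  rsum n (fun i => rsum m (fun j => f i j)) = rsum m (fun j => rsum n (fun i => f i j)).
Proof.
  induction n as [|n IH]; cbn [rsum].
  - symmetry; now apply rsum_eq_0.
  - now rewrite IH, <- rsum_plus.
Qed.

Lemma rsum2_term_le M N (y : nat -> nat -> R) m n : (m < M)%nat -> (n < N)%nat ->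
  y m n ^ 2 <= rsum M (fun m => rsum N (fun n => y m n ^ 2)).
Proof.
  intros Hm Hn.
  apply Rle_trans with (rsum N (fun n => y m n ^ 2)).
  - apply (rsum_term_le N (fun n => y m n ^ 2)); [intros; apply pow2_ge_0|exact Hn].
  - apply (rsum_term_le M (fun m => rsum N (fun n => y m n ^ 2))); [|exact Hm].
    intros; apply rsum_nonneg; intros; apply pow2_ge_0.
Qed.

Lemma rsum_sq_le_shift n (u v : nat -> R) w :
  0 <= w -> rsum n (fun i => u i * v i) <= 0 ->
  rsum n (fun i => u i ^ 2) <= rsum n (fun i => (u i - w * v i) ^ 2).
Proof.
  intros Hw Huv.
  assert (E : rsum n (fun i => (u i - w * v i) ^ 2) =
              rsum n (fun i => u i ^ 2) - 2 * w * rsum n (fun i => u i * v i)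
              + rsum n (fun i => (w * v i) ^ 2)).
  { rewrite <- rsum_mult_l, <- rsum_minus, <- rsum_plus.
    apply rsum_ext; intros; ring. }
  pose proof (rsum_nonneg n (fun i => (w * v i) ^ 2) (fun i _ => pow2_ge_0 _)).
  rewrite E. nra.
Qed.

Lemma Rabs_le_sqrt u X : u ^ 2 <= X -> Rabs u <= sqrt X.
Proof.
  intros H. rewrite <- sqrt_Rsqr_abs. apply sqrt_le_1_alt. unfold Rsqr. lra.
Qed.

Lemma dist3_nonneg r s : 0 <= dist3 r s.
Proof. destruct r as [[? ?] ?], s as [[? ?] ?]; apply sqrt_pos. Qed.

Lemma dist3_refl r : dist3 r r = 0.
Proof.
  destruct r as [[r1 r2] r3]; cbn.
  rewrite <- sqrt_0. f_equal. ring.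
Qed.

Lemma dist3_eq_0 r s : dist3 r s = 0 -> r = s.
Proof.
  destruct r as [[r1 r2] r3], s as [[s1 s2] s3]; cbn. intros H.
  pose proof (pow2_ge_0 (r1 - s1)). pose proof (pow2_ge_0 (r2 - s2)).
  pose proof (pow2_ge_0 (r3 - s3)).
  apply sqrt_eq_0 in H; [|lra].
  assert (r1 - s1 = 0) by nra.
  assert (r2 - s2 = 0) by nra.
  assert (r3 - s3 = 0) by nra.
  repeat f_equal; lra.
Qed.

Lemma coords_le_dist3 r s :
  Rabs (fst (fst r) - fst (fst s)) <= dist3 r s /\
  Rabs (snd (fst r) - snd (fst s)) <= dist3 r s /\
  Rabs (snd r - snd s) <= dist3 r s.
Proof.
  destruct r as [[r1 r2] r3], s as [[s1 s2] s3]; cbn.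
  pose proof (pow2_ge_0 (r1 - s1)). pose proof (pow2_ge_0 (r2 - s2)).
  pose proof (pow2_ge_0 (r3 - s3)).
  repeat split; apply Rabs_le_sqrt; lra.
Qed.

(** * The infimum phi *)

Lemma continuity_pt_lower_half f x0 :
  continuity_pt f x0 -> 0 < f x0 ->
  exists d, 0 < d /\ forall y, Rabs (y - x0) < d -> f x0 / 2 < f y.
Proof.
  intros Hf Hpos.
  destruct (Hf (f x0 / 2)) as [d [Hd Hclose]]; [lra|].
  exists d; split; [exact Hd|]. intros y Hy.
  destruct (Req_dec y x0) as [->|Hne]; [lra|].
  assert (Hfy : Rabs (f y - f x0) < f x0 / 2).
  { apply (Hclose y). split; [split; [exact I|congruence]|exact Hy]. }
  apply Rabs_def2 in Hfy. lra.
Qed.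

Lemma kappa_ge_half_near_0 (kappa : R -> R) c :
  0 < c -> continuity_pt kappa 0 -> 0 < kappa 0 ->
  exists del, 0 < del /\ forall d, 0 <= d <= del -> kappa 0 / 2 <= kappa (- (d / c)).
Proof.
  intros Hc Hkc Hk0.
  destruct (continuity_pt_lower_half kappa 0 Hkc Hk0) as [al [Hal Hnear]].
  pose proof (Rmult_lt_0_compat al c Hal Hc).
  exists (al * c / 2). split; [lra|]. intros d Hd.
  apply Rlt_le, Hnear. rewrite Rminus_0_r, Rabs_Ropp, Rabs_right.
  - apply (Rmult_lt_reg_r c); [exact Hc|]. unfold Rdiv. rewrite Rmult_assoc, Rinv_l; lra.
  - apply Rle_ge, Rdiv_le_0_compat; lra.
Qed.

Lemma rsum_continuity_pt n (F : nat -> R -> R) t :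
  (forall i, continuity_pt (F i) t) -> continuity_pt (fun s => rsum n (fun i => F i s)) t.
Proof.
  intros H; induction n as [|n IH]; cbn [rsum].
  - now apply continuity_pt_const.
  - exact (continuity_pt_plus _ _ _ IH (H n)).
Qed.

Lemma real_Glb_Rbar_le (E : R -> Prop) L y :
  (forall z, E z -> L <= z) -> E y -> real (Glb_Rbar E) <= y.
Proof.
  intros Hlow Hy. destruct (Glb_Rbar_correct E) as [Hlb Hgreatest].
  specialize (Hlb y Hy).
  assert (HL : Rbar_le L (Glb_Rbar E)) by (apply Hgreatest; intros z Hz; exact (Hlow z Hz)).
  destruct (Glb_Rbar E); simpl in *; tauto.
Qed.

Definition autocorr (kappa : R -> R) (fs : R) (N : nat) (t : R) : R :=
  rsum N (fun n => kappa (INR n / fs) * kappa (INR n / fs - t)).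

Definition corr_ratio (kappa : R -> R) (c fs : R) (N : nat) (t : R) : R :=
  rsum N (fun n => kappa (INR n / fs) * kappa (INR n / fs - t) / (4 * PI * c * t)).

Section PhiBound.

Variables (kappa : R -> R) (c fs B : R) (N : nat).
Hypotheses (Hc : 0 < c) (HN : (1 <= N)%nat) (Hk0 : 0 < kappa 0)
  (Hkc : forall t, continuity_pt kappa t) (HB : forall t, Rabs (kappa t) <= B).

Lemma autocorr_0_pos : 0 < autocorr kappa fs N 0.
Proof.
  assert (E : kappa 0 * kappa 0 = kappa (INR 0 / fs) * kappa (INR 0 / fs - 0))
    by (rewrite Rminus_0_r; simpl; now rewrite Rdiv_0_l).
  apply Rlt_le_trans with (kappa 0 * kappa 0); [nra|].
  rewrite E. apply (rsum_term_le N (fun n => kappa (INR n / fs) * kappa (INR n / fs - 0))); [|lia].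
  intros; rewrite Rminus_0_r; apply Rle_0_sqr.
Qed.

Lemma autocorr_pos_near_0 : exists al, 0 < al /\ forall t, 0 <= t < al -> 0 < autocorr kappa fs N t.
Proof.
  assert (Hcont : continuity_pt (autocorr kappa fs N) 0).
  { apply rsum_continuity_pt. intros n.
    apply continuity_pt_mult; [now apply continuity_pt_const|].
    apply (continuity_pt_comp (fun s => INR n / fs - s)); [|apply Hkc].
    apply continuity_pt_minus; [now apply continuity_pt_const|apply continuity_pt_id]. }
  destruct (continuity_pt_lower_half _ _ Hcont autocorr_0_pos) as [al [Hal Hnear]].
  exists al; split; [exact Hal|]. intros t Ht.
  pose proof autocorr_0_pos.
  assert (autocorr kappa fs N 0 / 2 < autocorr kappa fs N t)
    by (apply Hnear; rewrite Rminus_0_r, Rabs_right; lra).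
  lra.
Qed.

Lemma autocorr_lower_bound t : - (INR N * (B * B)) <= autocorr kappa fs N t.
Proof.
  unfold autocorr. replace (- (INR N * (B * B))) with (INR N * - (B * B)) by ring.
  rewrite <- rsum_const.
  apply rsum_le; intros n _.
  assert (Habs : Rabs (kappa (INR n / fs) * kappa (INR n / fs - t)) <= B * B)
    by (rewrite Rabs_mult; apply Rmult_le_compat; auto using Rabs_pos).
  pose proof (Rabs_maj2 (kappa (INR n / fs) * kappa (INR n / fs - t))). lra.
Qed.

Lemma corr_ratio_autocorr t :
  0 < t -> corr_ratio kappa c fs N t = autocorr kappa fs N t / (4 * PI * c * t).
Proof. intros Ht. unfold corr_ratio, autocorr, Rdiv. now rewrite rsum_mult_r. Qed.

Lemma corr_ratio_bounded_below : exists L, forall t, 0 < t -> L <= corr_ratio kappa c fs N t.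
Proof.
  destruct autocorr_pos_near_0 as [al [Hal Hpos]].
  assert (HPI := PI_RGT_0).
  exists (- (INR N * (B * B)) / (4 * PI * c * al)). intros t Ht.
  rewrite corr_ratio_autocorr by exact Ht.
  assert (HNB : 0 <= INR N * (B * B)) by (apply Rmult_le_pos; [apply pos_INR|nra]).
  assert (H4PIc : 0 < 4 * PI * c) by (apply Rmult_lt_0_compat; lra).
  assert (Hden : 0 < 4 * PI * c * al) by (apply Rmult_lt_0_compat; lra).
  assert (Hden_t : 0 < 4 * PI * c * t) by (apply Rmult_lt_0_compat; lra).
  pose proof (autocorr_lower_bound t).
  assert (Hv : 0 < / (4 * PI * c * al)) by (apply Rinv_0_lt_compat; lra).
  assert (Hu : 0 < / (4 * PI * c * t)) by (apply Rinv_0_lt_compat; lra).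
  unfold Rdiv.
  destruct (Rlt_le_dec t al) as [Hsmall|Hlarge].
  - pose proof (Hpos t (conj (Rlt_le _ _ Ht) Hsmall)). nra.
  - assert (/ (4 * PI * c * t) <= / (4 * PI * c * al))
      by (apply Rinv_le_contravar; [lra|]; apply Rmult_le_compat_l; lra).
    nra.
Qed.

Lemma phi_val_le t : 0 < t -> phi_val kappa c fs N <= corr_ratio kappa c fs N t.
Proof.
  intros Ht. destruct corr_ratio_bounded_below as [L HL].
  apply (real_Glb_Rbar_le _ L).
  - intros z [s [Hs ->]]. now apply HL.
  - now exists t.
Qed.

End PhiBound.

(** * The relaxed problem *)

Inductive param : Type :=
  | Amp (k : nat) | PosX (k : nat) | PosY (k : nat) | PosZ (k : nat) | Wgt (k m : nat).

Definition amp (p : param -> R) (k : nat) : R := p (Amp k).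
Definition loc (p : param -> R) (k : nat) : pt3 := (p (PosX k), p (PosY k), p (PosZ k)).

Section Relaxation.

Variables (kappa : R -> R) (c fs lambda : R) (M N K : nat) (mic : nat -> pt3)
  (x : nat -> nat -> R).
Hypotheses (Hc : 0 < c) (Hlam : 0 < lambda).

Definition sqerr (y : nat -> nat -> R) : R :=
  rsum M (fun m => rsum N (fun n => (x m n - y m n) ^ 2)).

Definition signal (a : nat -> R) (r : nat -> pt3) (m n : nat) : R :=
  rsum K (fun k => a k * gamma kappa c fs mic (r k) m n).

Lemma objective_sqerr a r :
  objective kappa c fs lambda M N K mic x a r = / 2 * sqerr (signal a r) + lambda * rsum K a.
Proof. reflexivity. Qed.

Lemma sqerr_nonneg y : 0 <= sqerr y.
Proof. apply rsum_nonneg; intros; apply rsum_nonneg; intros; apply pow2_ge_0. Qed.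

Lemma sqerr_0 : sqerr (fun _ _ => 0) = sqnorm_x M N x.
Proof. apply rsum_ext; intros; apply rsum_ext; intros; ring. Qed.

Definition range_max : R := c * (INR (N - 1) / fs).

Lemma inC_dist_pos r m : inC c fs M N mic r -> (m < M)%nat -> 0 < dist3 r (mic m).
Proof.
  intros [_ HE] Hm. destruct (Rle_lt_or_eq_dec _ _ (dist3_nonneg r (mic m))) as [|E]; [easy|].
  exfalso. apply HE. exists m. split; [exact Hm|]. now apply dist3_eq_0.
Qed.

(* [p (Wgt k m)] plays the role of [a_k / |r_k - mic_m|]. *)
Definition relaxed_signal (p : param -> R) (m n : nat) : R :=
  rsum K (fun k => p (Wgt k m) * kappa (INR n / fs - dist3 (loc p k) (mic m) / c) / (4 * PI)).

Definition relaxed_objective (p : param -> R) : R :=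
  / 2 * sqerr (relaxed_signal p) + lambda * rsum K (amp p).

Definition relaxed_feasible (p : param -> R) : Prop :=
  forall k m, (k < K)%nat -> (m < M)%nat ->
    p (Wgt k m) * dist3 (loc p k) (mic m) = amp p k /\ dist3 (loc p k) (mic m) <= range_max.

(* Indices k >= K and m >= M are padded with values inside the box of [in_box]. *)
Definition lift (a : nat -> R) (r : nat -> pt3) (i : param) : R :=
  let rk k := if (k <? K)%nat then r k else mic 0%nat in
  match i with
  | Amp k => if (k <? K)%nat then a k else 0
  | PosX k => fst (fst (rk k))
  | PosY k => snd (fst (rk k))
  | PosZ k => snd (rk k)
  | Wgt k m => if andb (k <? K)%nat (m <? M)%nat then a k / dist3 (r k) (mic m) else 0
  end.

Lemma lift_loc a r k : (k < K)%nat -> loc (lift a r) k = r k.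
Proof.
  intros Hk. unfold loc, lift. apply Nat.ltb_lt in Hk. rewrite Hk.
  now destruct (r k) as [[? ?] ?].
Qed.

Lemma lift_amp a r k : (k < K)%nat -> amp (lift a r) k = a k.
Proof. intros Hk. unfold amp, lift. apply Nat.ltb_lt in Hk. now rewrite Hk. Qed.

Lemma lift_wgt a r k m : (k < K)%nat -> (m < M)%nat ->
  lift a r (Wgt k m) = a k / dist3 (r k) (mic m).
Proof.
  intros Hk Hm. unfold lift. apply Nat.ltb_lt in Hk, Hm. now rewrite Hk, Hm.
Qed.

Lemma relaxed_feasible_lift a r :
  feasible c fs M N K mic a r -> relaxed_feasible (lift a r).
Proof.
  intros Hf k m Hk Hm. rewrite lift_loc, lift_wgt, lift_amp by assumption.
  pose proof (inC_dist_pos _ _ (proj2 (Hf k Hk)) Hm).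
  split; [field; lra|]. now apply (proj2 (Hf k Hk)).
Qed.

Lemma relaxed_objective_lift a r :
  feasible c fs M N K mic a r ->
  relaxed_objective (lift a r) = objective kappa c fs lambda M N K mic x a r.
Proof.
  intros Hf. pose proof PI_RGT_0.
  unfold relaxed_objective. rewrite objective_sqerr.
  rewrite (rsum_ext K (amp (lift a r)) a) by (intros; now apply lift_amp).
  do 2 f_equal. apply rsum_ext; intros m Hm. apply rsum_ext; intros n _.
  unfold relaxed_signal, signal. do 2 f_equal. apply rsum_ext; intros k Hk.
  rewrite lift_loc, lift_wgt by assumption.
  pose proof (inC_dist_pos _ _ (proj2 (Hf k Hk)) Hm).
  unfold gamma. field. lra.
Qed.

Definition recover_pos (p : param -> R) (r0 : pt3) (k : nat) : pt3 :=
  if Rlt_dec 0 (amp p k) then loc p k else r0.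

Lemma feasible_recover_pos p r0 :
  inC c fs M N mic r0 -> (forall k, (k < K)%nat -> 0 <= amp p k) -> relaxed_feasible p ->
  feasible c fs M N K mic (amp p) (recover_pos p r0).
Proof.
  intros Hr0 Ha Hp k Hk. split; [now apply Ha|].
  unfold recover_pos. destruct (Rlt_dec 0 (amp p k)) as [Hpos|_]; [|exact Hr0].
  split.
  - intros m Hm. apply (Hp k m Hk Hm).
  - intros [m [Hm E]]. destruct (Hp k m Hk Hm) as [Hw _].
    rewrite E, dist3_refl, Rmult_0_r in Hw. lra.
Qed.

(* Atoms of zero amplitude may keep a positive weight in the relaxation only by sitting on
   a microphone; there they contribute a multiple of the sampled kernel. *)
Definition ghost_weight (p : param -> R) (m : nat) : R :=
  rsum K (fun k => if Rlt_dec 0 (amp p k) then 0 else p (Wgt k m) / (4 * PI)).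

Lemma relaxed_signal_split p r0 m n :
  (forall k, (k < K)%nat -> 0 <= amp p k) -> relaxed_feasible p -> (m < M)%nat ->
  relaxed_signal p m n =
  signal (amp p) (recover_pos p r0) m n + ghost_weight p m * kappa (INR n / fs).
Proof.
  intros Ha Hp Hm. pose proof PI_RGT_0.
  unfold relaxed_signal, signal, ghost_weight.
  rewrite <- rsum_mult_r, <- rsum_plus. apply rsum_ext; intros k Hk.
  destruct (Hp k m Hk Hm) as [Hw _]. unfold recover_pos.
  destruct (Rlt_dec 0 (amp p k)) as [Hpos|Hnpos].
  - assert (dist3 (loc p k) (mic m) <> 0) by (intros E; rewrite E, Rmult_0_r in Hw; lra).
    unfold gamma. rewrite <- Hw. field. lra.
  - assert (Hz : amp p k = 0) by (pose proof (Ha k Hk); lra).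
    rewrite Hz in Hw |- *. apply Rmult_integral in Hw as [E|E]; rewrite E.
    + field. lra.
    + unfold Rdiv. rewrite Rmult_0_l, Rminus_0_r. field. lra.
Qed.

Lemma gamma_corr r m :
  0 < dist3 r (mic m) ->
  rsum N (fun n => gamma kappa c fs mic r m n * kappa (INR n / fs)) =
  corr_ratio kappa c fs N (dist3 r (mic m) / c).
Proof.
  intros Hd. pose proof PI_RGT_0.
  apply rsum_ext; intros n _. unfold gamma. field. lra.
Qed.

Section GhostRemoval.

Variable phi : R.
Hypothesis Hphi : forall t, 0 < t -> phi <= corr_ratio kappa c fs N t.

Lemma signal_corr_ge a r m :
  feasible c fs M N K mic a r -> (m < M)%nat ->
  phi * rsum K a <= rsum N (fun n => signal a r m n * kappa (INR n / fs)).
Proof.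
  intros Hf Hm.
  assert (E : rsum N (fun n => signal a r m n * kappa (INR n / fs)) =
              rsum K (fun k => a k *
                rsum N (fun n => gamma kappa c fs mic (r k) m n * kappa (INR n / fs)))).
  { unfold signal. rewrite (rsum_ext N _ (fun n => rsum K (fun k =>
      a k * (gamma kappa c fs mic (r k) m n * kappa (INR n / fs))))).
    - rewrite rsum_swap. apply rsum_ext; intros k _. apply rsum_mult_l.
    - intros n _. rewrite <- rsum_mult_r. apply rsum_ext; intros; ring. }
  rewrite E, <- rsum_mult_l. apply rsum_le; intros k Hk.
  destruct (Hf k Hk) as [Ha Hr].
  pose proof (inC_dist_pos _ _ Hr Hm).
  rewrite gamma_corr by assumption. rewrite Rmult_comm.
  apply Rmult_le_compat_l; [exact Ha|]. apply Hphi, Rdiv_lt_0_compat; assumption.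
Qed.

Lemma objective_recover_le p r0 :
  inC c fs M N mic r0 ->
  (forall k, (k < K)%nat -> 0 <= amp p k) ->
  (forall k m, (k < K)%nat -> (m < M)%nat -> 0 <= p (Wgt k m)) ->
  relaxed_feasible p ->
  (forall m, (m < M)%nat -> mu kappa fs N x m <= phi * rsum K (amp p)) ->
  objective kappa c fs lambda M N K mic x (amp p) (recover_pos p r0) <= relaxed_objective p.
Proof.
  intros Hr0 Ha Hw Hp Hmu. pose proof PI_RGT_0.
  rewrite objective_sqerr. unfold relaxed_objective.
  apply Rplus_le_compat_r, Rmult_le_compat_l; [lra|].
  apply rsum_le; intros m Hm.
  set (G := signal (amp p) (recover_pos p r0)).
  rewrite (rsum_ext N (fun n => (x m n - relaxed_signal p m n) ^ 2)
             (fun n => (x m n - G m n - ghost_weight p m * kappa (INR n / fs)) ^ 2))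
    by (intros n _; rewrite (relaxed_signal_split p r0) by assumption; unfold G; ring).
  apply (rsum_sq_le_shift N (fun n => x m n - G m n) (fun n => kappa (INR n / fs))).
  - apply rsum_nonneg; intros k Hk. destruct (Rlt_dec 0 (amp p k)); [lra|].
    apply Rdiv_le_0_compat; [now apply Hw|lra].
  - assert (Hcorr := signal_corr_ge _ _ m (feasible_recover_pos p r0 Hr0 Ha Hp) Hm).
    specialize (Hmu m Hm). unfold mu in Hmu. fold G in Hcorr.
    rewrite (rsum_ext N _ (fun n => x m n * kappa (INR n / fs) - G m n * kappa (INR n / fs)))
      by (intros; ring).
    rewrite rsum_minus. lra.
Qed.

End GhostRemoval.

Local Notation X2 := (sqnorm_x M N x).

Lemma objective_zero_amp r :
  objective kappa c fs lambda M N K mic x (fun _ => 0) r = / 2 * X2.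
Proof.
  rewrite objective_sqerr, <- sqerr_0, (rsum_eq_0 K (fun _ => 0)) by reflexivity.
  rewrite Rmult_0_r, Rplus_0_r. f_equal.
  apply rsum_ext; intros m _; apply rsum_ext; intros n _.
  unfold signal. rewrite rsum_eq_0 by (intros; ring). reflexivity.
Qed.

Definition amp_bound : R := X2 / (2 * lambda).

Lemma mass_le_amp_bound y s : / 2 * sqerr y + lambda * s <= / 2 * X2 -> s <= amp_bound.
Proof.
  intros H. pose proof (sqerr_nonneg y). unfold amp_bound.
  apply (Rmult_le_reg_l lambda); [exact Hlam|].
  replace (lambda * (X2 / (2 * lambda))) with (/ 2 * X2) by (field; lra). lra.
Qed.

Lemma amp_bound_nonneg : 0 <= amp_bound.
Proof.
  unfold amp_bound. apply Rdiv_le_0_compat; [|lra].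
  apply rsum_nonneg; intros; apply rsum_nonneg; intros; apply pow2_ge_0.
Qed.

Lemma amp_le_amp_bound a r k :
  feasible c fs M N K mic a r -> objective kappa c fs lambda M N K mic x a r <= / 2 * X2 ->
  (k < K)%nat -> 0 <= a k <= amp_bound.
Proof.
  intros Hf Hobj Hk. split; [apply (Hf k Hk)|].
  apply Rle_trans with (rsum K a).
  - apply rsum_term_le; [intros i Hi; apply (Hf i Hi)|exact Hk].
  - apply (mass_le_amp_bound (signal a r)). now rewrite <- objective_sqerr.
Qed.

Lemma mu_le_phi_mass phi mu0 s :
  0 <= s <= amp_bound ->
  (phi < 0 /\ mu0 <= phi / (2 * lambda) * X2) \/ (0 <= phi /\ mu0 <= 0) ->
  mu0 <= phi * s.
Proof.
  unfold amp_bound. intros Hs [[Hphi Hmu]|[Hphi Hmu]].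
  - replace (phi / (2 * lambda) * X2) with (phi * (X2 / (2 * lambda))) in Hmu
      by (field; lra).
    pose proof (Rmult_le_compat_neg_l phi _ _ (Rlt_le _ _ Hphi) (proj2 Hs)). lra.
  - pose proof (Rmult_le_pos _ _ Hphi (proj1 Hs)). lra.
Qed.

Section WeightBound.

Variables (B del : R).
Hypotheses (HM : (1 <= M)%nat) (HN : (1 <= N)%nat) (Hfs : 0 < fs) (Hk0 : 0 < kappa 0)
  (HB : forall t, Rabs (kappa t) <= B) (Hdel : 0 < del)
  (Hkdel : forall d, 0 <= d <= del -> kappa 0 / 2 <= kappa (- (d / c))).

Definition far_atom_bound : R := amp_bound * B / (4 * PI * del).

(* The sample [n = 0] of an atom within [del] of microphone [m] is at least proportional to
   its weight, while the other atoms cannot compensate for more than [far_atom_bound] each. *)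
Definition near_weight_bound : R := 8 * PI * (2 * sqrt X2 + INR K * far_atom_bound) / kappa 0.

Definition weight_bound : R := near_weight_bound + amp_bound / del.

Lemma far_atom_bound_nonneg : 0 <= far_atom_bound.
Proof.
  pose proof PI_RGT_0. pose proof amp_bound_nonneg.
  pose proof (Rle_trans _ _ _ (Rabs_pos (kappa 0)) (HB 0)).
  unfold far_atom_bound. apply Rdiv_le_0_compat; [nra|].
  apply Rmult_lt_0_compat; lra.
Qed.

Lemma near_weight_bound_nonneg : 0 <= near_weight_bound.
Proof.
  pose proof PI_RGT_0. pose proof far_atom_bound_nonneg. pose proof (sqrt_pos X2).
  pose proof (Rmult_le_pos _ _ (pos_INR K) far_atom_bound_nonneg).
  unfold near_weight_bound. apply Rdiv_le_0_compat; [nra|lra].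
Qed.

Lemma weight_bound_nonneg : 0 <= weight_bound.
Proof.
  pose proof near_weight_bound_nonneg. pose proof amp_bound_nonneg.
  pose proof (Rdiv_le_0_compat _ _ amp_bound_nonneg Hdel). unfold weight_bound. lra.
Qed.

Lemma signal_sample_le a r m :
  feasible c fs M N K mic a r -> objective kappa c fs lambda M N K mic x a r <= / 2 * X2 ->
  (m < M)%nat -> signal a r m 0 <= 2 * sqrt X2.
Proof.
  intros Hf Hobj Hm. rewrite objective_sqerr in Hobj.
  pose proof (Rmult_le_pos _ _ (Rlt_le _ _ Hlam) (rsum_nonneg K a (fun k Hk => proj1 (Hf k Hk)))).
  assert (Hres : (x m 0%nat - signal a r m 0%nat) ^ 2 <= X2).
  { apply Rle_trans with (sqerr (signal a r)); [|lra].
    apply (rsum2_term_le M N (fun m n => x m n - signal a r m n)); lia. }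
  assert (Hx : x m 0%nat ^ 2 <= X2) by (apply rsum2_term_le; lia).
  apply Rabs_le_sqrt in Hres, Hx.
  pose proof (Rle_abs (x m 0%nat)). pose proof (Rabs_maj2 (x m 0%nat - signal a r m 0%nat)).
  lra.
Qed.

Lemma gamma_sample_0 r m :
  gamma kappa c fs mic r m 0 = kappa (- (dist3 r (mic m) / c)) / (4 * PI * dist3 r (mic m)).
Proof. unfold gamma. change (INR 0) with 0. now rewrite Rdiv_0_l, Rminus_0_l. Qed.

Lemma atom_sample_ge a r m :
  0 <= a <= amp_bound -> 0 < dist3 r (mic m) ->
  - far_atom_bound <= a * gamma kappa c fs mic r m 0.
Proof.
  intros Ha Hd. pose proof PI_RGT_0. pose proof far_atom_bound_nonneg.
  rewrite gamma_sample_0. set (d := dist3 r (mic m)) in *.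
  assert (H4d : 0 < 4 * PI * d) by (apply Rmult_lt_0_compat; lra).
  destruct (Rle_lt_dec d del) as [Hnear|Hfar].
  - pose proof (Hkdel d (conj (Rlt_le _ _ Hd) Hnear)).
    assert (Hg : 0 <= kappa (- (d / c)) / (4 * PI * d)) by (apply Rdiv_le_0_compat; lra).
    pose proof (Rmult_le_pos _ _ (proj1 Ha) Hg). lra.
  - set (Z := B / (4 * PI * del)).
    assert (HZ : Rabs (kappa (- (d / c)) / (4 * PI * d)) <= Z).
    { unfold Rdiv, Z. rewrite Rabs_mult, (Rabs_right (/ (4 * PI * d)))
        by (apply Rle_ge, Rlt_le, Rinv_0_lt_compat; lra).
      apply Rmult_le_compat; [apply Rabs_pos|apply Rlt_le, Rinv_0_lt_compat; lra|apply HB|].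
      apply Rinv_le_contravar; [apply Rmult_lt_0_compat; lra|].
      apply Rmult_le_compat_l; lra. }
    assert (E : far_atom_bound = amp_bound * Z) by (unfold far_atom_bound, Z, Rdiv; ring).
    pose proof (Rabs_maj2 (kappa (- (d / c)) / (4 * PI * d))).
    pose proof (Rle_trans _ _ _ (Rabs_pos _) HZ). nra.
Qed.

Lemma atom_sample_le a r k m :
  feasible c fs M N K mic a r -> objective kappa c fs lambda M N K mic x a r <= / 2 * X2 ->
  (k < K)%nat -> (m < M)%nat ->
  a k * gamma kappa c fs mic (r k) m 0 <= 2 * sqrt X2 + INR K * far_atom_bound.
Proof.
  intros Hf Hobj Hk Hm.
  pose proof (signal_sample_le a r m Hf Hobj Hm).
  pose proof (rsum_term_le_shift K (fun k' => a k' * gamma kappa c fs mic (r k') m 0) k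
    far_atom_bound far_atom_bound_nonneg
    (fun k' Hk' => atom_sample_ge _ _ _ (amp_le_amp_bound a r k' Hf Hobj Hk')
                     (inC_dist_pos _ _ (proj2 (Hf k' Hk')) Hm)) Hk).
  unfold signal in *. lra.
Qed.

Lemma weight_le a r k m :
  feasible c fs M N K mic a r -> objective kappa c fs lambda M N K mic x a r <= / 2 * X2 ->
  (k < K)%nat -> (m < M)%nat -> a k / dist3 (r k) (mic m) <= weight_bound.
Proof.
  intros Hf Hobj Hk Hm. pose proof PI_RGT_0.
  pose proof (atom_sample_le a r k m Hf Hobj Hk Hm) as Hatom. rewrite gamma_sample_0 in Hatom.
  pose proof (amp_le_amp_bound a r k Hf Hobj Hk) as Ha.
  pose proof (inC_dist_pos _ _ (proj2 (Hf k Hk)) Hm) as Hd.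
  set (d := dist3 (r k) (mic m)) in *.
  pose proof near_weight_bound_nonneg. pose proof (Rdiv_le_0_compat _ _ amp_bound_nonneg Hdel).
  unfold weight_bound.
  destruct (Rle_lt_dec d del) as [Hnear|Hfar].
  - pose proof (Hkdel d (conj (Rlt_le _ _ Hd) Hnear)).
    assert (0 <= a k / d) by (apply Rdiv_le_0_compat; lra).
    assert (E : a k * (kappa (- (d / c)) / (4 * PI * d)) =
                a k / d * kappa (- (d / c)) / (4 * PI)) by (field; lra).
    rewrite E in Hatom.
    apply Rmult_le_compat_l with (r := 4 * PI) in Hatom; [|lra].
    replace (4 * PI * (a k / d * kappa (- (d / c)) / (4 * PI)))
      with (a k / d * kappa (- (d / c))) in Hatom by (field; lra).
    assert (a k / d <= near_weight_bound).
    { unfold near_weight_bound. apply (Rmult_le_reg_r (kappa 0)); [exact Hk0|].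
      unfold Rdiv at 2. rewrite Rmult_assoc, Rinv_l, Rmult_1_r by lra. nra. }
    lra.
  - assert (a k / d <= amp_bound / del).
    { unfold Rdiv. apply Rmult_le_compat; [lra|apply Rlt_le, Rinv_0_lt_compat; lra|lra|].
      apply Rinv_le_contravar; lra. }
    lra.
Qed.

Definition box_lo (i : param) : R :=
  match i with
  | Amp _ | Wgt _ _ => 0
  | PosX _ => fst (fst (mic 0%nat)) - range_max
  | PosY _ => snd (fst (mic 0%nat)) - range_max
  | PosZ _ => snd (mic 0%nat) - range_max
  end.

Definition box_hi (i : param) : R :=
  match i with
  | Amp _ => amp_bound
  | Wgt _ _ => weight_bound
  | PosX _ => fst (fst (mic 0%nat)) + range_max
  | PosY _ => snd (fst (mic 0%nat)) + range_max
  | PosZ _ => snd (mic 0%nat) + range_max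
  end.

Definition in_box (p : param -> R) : Prop := forall i, box_lo i <= p i <= box_hi i.

Lemma lift_in_box a r :
  feasible c fs M N K mic a r -> objective kappa c fs lambda M N K mic x a r <= / 2 * X2 ->
  in_box (lift a r).
Proof.
  intros Hf Hobj.
  assert (Hrad : 0 <= range_max).
  { unfold range_max. apply Rmult_le_pos; [lra|]. apply Rdiv_le_0_compat; [apply pos_INR|lra]. }
  assert (Hpos : forall k,
    dist3 (if (k <? K)%nat then r k else mic 0%nat) (mic 0%nat) <= range_max).
  { intros k. destruct (Nat.ltb_spec k K) as [Hk|_].
    - apply (proj2 (Hf k Hk)). lia.
    - now rewrite dist3_refl. }
  pose proof amp_bound_nonneg.
  intros [k|k|k|k|k m]; cbn [lift box_lo box_hi];
    try (destruct (coords_le_dist3 (if (k <? K)%nat then r k else mic 0%nat) (mic 0%nat))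
           as (Hx & Hy & Hz);
         apply Rabs_le_between'; eapply Rle_trans; [eassumption|apply Hpos]).
  - destruct (Nat.ltb_spec k K) as [Hk|_]; [now apply (amp_le_amp_bound a r)|lra].
  - pose proof weight_bound_nonneg.
    destruct (Nat.ltb_spec k K) as [Hk|_], (Nat.ltb_spec m M) as [Hm|_]; cbn [andb]; try lra.
    pose proof (inC_dist_pos _ _ (proj2 (Hf k Hk)) Hm).
    split; [apply Rdiv_le_0_compat; [apply (Hf k Hk)|lra]|now apply weight_le].
Qed.

Lemma lift_zero_amp r0 :
  inC c fs M N mic r0 ->
  in_box (lift (fun _ => 0) (fun _ => r0)) /\ relaxed_feasible (lift (fun _ => 0) (fun _ => r0)) /\
  relaxed_objective (lift (fun _ => 0) (fun _ => r0)) = / 2 * X2.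
Proof.
  intros Hr0.
  assert (Hf : feasible c fs M N K mic (fun _ => 0) (fun _ => r0)) by (split; [lra|exact Hr0]).
  rewrite relaxed_objective_lift, objective_zero_amp by exact Hf.
  split; [|split; [|reflexivity]].
  - apply lift_in_box; [exact Hf|]. rewrite objective_zero_amp. lra.
  - now apply relaxed_feasible_lift.
Qed.

Lemma solution_of_relaxed_minimizer phi p r0 :
  (forall t, 0 < t -> phi <= corr_ratio kappa c fs N t) ->
  (phi < 0 /\ (forall m, (m < M)%nat -> mu kappa fs N x m <= phi / (2 * lambda) * X2)) \/
  (0 <= phi /\ (forall m, (m < M)%nat -> mu kappa fs N x m <= 0)) ->
  inC c fs M N mic r0 -> in_box p -> relaxed_feasible p ->
  (forall q, in_box q -> relaxed_feasible q -> relaxed_objective p <= relaxed_objective q) ->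
  is_solution kappa c fs lambda M N K mic x (amp p) (recover_pos p r0).
Proof.
  intros Hphi Hcase Hr0 Hbox Hp Hmin.
  destruct (lift_zero_amp r0 Hr0) as (Hbox0 & Hp0 & Hobj0).
  assert (Hobj : relaxed_objective p <= / 2 * X2) by (rewrite <- Hobj0; now apply Hmin).
  assert (Ha : forall k, (k < K)%nat -> 0 <= amp p k) by (intros k _; apply (Hbox (Amp k))).
  assert (Hmass : 0 <= rsum K (amp p) <= amp_bound)
    by (split; [now apply rsum_nonneg|exact (mass_le_amp_bound _ _ Hobj)]).
  assert (Hmu : forall m, (m < M)%nat -> mu kappa fs N x m <= phi * rsum K (amp p)).
  { intros m Hm. apply mu_le_phi_mass; [exact Hmass|].
    destruct Hcase as [[Hsign Hbound]|[Hsign Hbound]]; [left|right]; auto. }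
  split; [now apply feasible_recover_pos|]. intros a r Hf.
  apply Rle_trans with (relaxed_objective p).
  { apply (objective_recover_le phi); auto. intros k m _ _. apply (Hbox (Wgt k m)). }
  destruct (Rle_lt_dec (objective kappa c fs lambda M N K mic x a r) (/ 2 * X2)) as [Hle|Hgt].
  - rewrite <- relaxed_objective_lift by exact Hf.
    apply Hmin; [now apply lift_in_box|now apply relaxed_feasible_lift].
  - lra.
Qed.

End WeightBound.

End Relaxation.

(** * Existence of a relaxed minimizer *)

Section Compactness.

Import all_boot all_order all_algebra all_classical all_reals topology normedtype derive.
Import Rstruct Rstruct_topology ArrowAsProduct.
Local Open Scope classical_set_scope.
Local Open Scope R_scope.

Lemma box_min_exists (I : eqType) (lo hi : I -> R) (S : set (I -> R)) (G : (I -> R) -> R) :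
  closed S -> continuous G ->
  (exists f0, (forall i, lo i <= f0 i <= hi i) /\ S f0) ->
  exists p, ((forall i, lo i <= p i <= hi i) /\ S p) /\
    forall q, (forall i, lo i <= q i <= hi i) -> S q -> G p <= G q.
Proof.
move=> cS cG [f0 [Hf0 Sf0]].
pose A := [set f : I -> R | forall i, `[lo i, hi i] (f i)] `&` S.
have memA f : A f <-> (forall i, lo i <= f i <= hi i) /\ S f.
  rewrite /A /=; split=> -[Hbox HS]; split=> // i; have := Hbox i.
  - by rewrite /= in_itv /= => /andP[/RleP ? /RleP ?].
  - by move=> [? ?]; rewrite /= in_itv /=; apply/andP; split; apply/RleP.
have cA : compact A.
  apply: compact_closedI => //.
  exact: (@tychonoff _ (fun _ => R) (fun i => `[lo i, hi i])
    (fun i => @segment_compact R (lo i) (hi i))).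
have [p Ap pmin] := compact_EVT_min (ex_intro _ f0 (proj2 (memA f0) (conj Hf0 Sf0))) cA
  (continuous_subspaceT cG).
exists p; split; first by apply/memA; rewrite -in_setE.
by move=> q Hq Sq; apply/RleP; apply: pmin; rewrite in_setE; apply/memA.
Qed.

Lemma param_eq_dec (i j : param) : {i = j} + {i <> j}.
Proof. decide equality; apply Nat.eq_dec. Defined.

HB.instance Definition _ := comparableMixin param_eq_dec.

Lemma continuous_cst_R {T : topologicalType} (y : R) : continuous (fun _ : T => y).
Proof. by move=> t; apply: cst_continuous. Qed.

Lemma continuous_Rplus {T : topologicalType} {g h : T -> R} :
  continuous g -> continuous h -> continuous (fun t => g t + h t).
Proof. by move=> cg ch t; apply: (@continuousD R R^o T g h t (cg t) (ch t)). Qed.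

Lemma continuous_Rmult {T : topologicalType} {g h : T -> R} :
  continuous g -> continuous h -> continuous (fun t => g t * h t).
Proof. by move=> cg ch t; apply: (@continuousM R T g h t (cg t) (ch t)). Qed.

Lemma continuous_comp_pt {T : topologicalType} {g : T -> R} {F : R -> R} :
  continuous g -> (forall t, continuity_pt F (g t)) -> continuous (fun t => F (g t)).
Proof.
move=> cg cF t; apply: (continuous_comp (f := g) (g := F)); first exact: cg.
by apply/continuity_pt_cvg; apply: cF.
Qed.

Lemma continuous_Ropp {T : topologicalType} {g : T -> R} :
  continuous g -> continuous (fun t => - g t).
Proof.
move=> cg; apply: continuous_comp_pt => // t.
exact/continuity_pt_opp/continuity_pt_id.
Qed.

Lemma continuous_Rminus {T : topologicalType} {g h : T -> R} :
  continuous g -> continuous h -> continuous (fun t => g t - h t).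
Proof. by move=> cg ch; apply: continuous_Rplus => //; apply: continuous_Ropp. Qed.

Lemma continuous_Rsqr {T : topologicalType} {g : T -> R} :
  continuous g -> continuous (fun t => g t ^ 2).
Proof.
by move=> cg; apply: (continuous_Rmult cg (continuous_Rmult cg (continuous_cst_R 1))).
Qed.

Lemma continuous_rsum {T : topologicalType} n (G : nat -> T -> R) :
  (forall i, continuous (G i)) -> continuous (fun t => rsum n (fun i => G i t)).
Proof.
move=> cG; elim: n => [|n IH] /=; first exact: continuous_cst_R.
exact: continuous_Rplus.
Qed.

Lemma continuous_dist3 {T : topologicalType} (g1 g2 g3 : T -> R) s :
  continuous g1 -> continuous g2 -> continuous g3 ->
  continuous (fun t => dist3 (g1 t, g2 t, g3 t) s).
Proof.
move=> c1 c2 c3; case: s => [[s1 s2] s3] /=.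
apply: continuous_comp_pt.
  by do 2 ?apply: continuous_Rplus; apply: continuous_Rsqr;
    apply: continuous_Rminus => //; apply: continuous_cst_R.
move=> t; apply: continuity_pt_sqrt.
have := pow2_ge_0 (g1 t - s1); have := pow2_ge_0 (g2 t - s2);
  have := pow2_ge_0 (g3 t - s3); lra.
Qed.

Lemma closed_Rle_0 : closed [set y : R | y <= 0].
Proof.
have -> : [set y : R | y <= 0] = [set y | (y <= 0)%R].
  by apply/seteqP; split=> y /= /RleP.
exact: closed_le.
Qed.

Lemma closed_Rle {T : topologicalType} {g h : T -> R} :
  continuous g -> continuous h -> closed [set t | g t <= h t].
Proof.
move=> cg ch; have -> : [set t | g t <= h t] = (fun t => g t - h t) @^-1` [set y | y <= 0].
  by apply/seteqP; split=> t /= H; lra.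
by apply: (proj1 (continuous_closedP _) (continuous_Rminus cg ch)); apply: closed_Rle_0.
Qed.

Lemma closed_Req {T : topologicalType} {g h : T -> R} :
  continuous g -> continuous h -> closed [set t | g t = h t].
Proof.
move=> cg ch; have -> : [set t | g t = h t] = (fun t => g t - h t) @^-1` [set y | y = 0].
  by apply/seteqP; split=> t /= H; lra.
by apply: (proj1 (continuous_closedP _) (continuous_Rminus cg ch)); apply: closed_eq.
Qed.

Ltac continuity_R := repeat match goal with
  | |- continuous (fun _ => ?c) => apply: continuous_cst_R
  | |- continuous (fun f => rsum _ _) => apply: continuous_rsum => ?
  | |- continuous (fun f => Rplus _ _) => apply: continuous_Rplus
  | |- continuous (fun f => Rminus _ _) => apply: continuous_Rminus
  | |- continuous (fun f => Rmult _ _) => apply: continuous_Rmult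
  | |- continuous (fun f => Rdiv _ _) => rewrite /Rdiv
  | |- continuous (fun f => pow _ 2) => apply: continuous_Rsqr
  | |- continuous (fun f => dist3 (_, _, _) _) => apply: continuous_dist3
  | |- continuous (fun f => f _) => apply: proj_continuous
  | |- continuous (fun f => ?F _) => apply: (continuous_comp_pt (F := F)); last by move=> ?; auto
  end.

Lemma relaxed_feasible_closed c fs M N K mic :
  closed [set p | relaxed_feasible c fs M N K mic p].
Proof.
have -> : [set p | relaxed_feasible c fs M N K mic p] =
  \bigcap_(k in [set k | (k < K)%coq_nat]) \bigcap_(m in [set m | (m < M)%coq_nat])
    ([set p | p (Wgt k m) * dist3 (loc p k) (mic m) = amp p k] `&`
     [set p | dist3 (loc p k) (mic m) <= range_max c fs N]).
  apply/seteqP; split=> p /= Hp k Hk m Hm; first exact: Hp.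
  exact: (Hp k m Hk Hm).
apply: closed_bigI => k _; apply: closed_bigI => m _; apply: closedI.
- by apply: closed_Req; rewrite /loc /amp; continuity_R.
- by apply: closed_Rle; rewrite /loc; continuity_R.
Qed.

Lemma relaxed_objective_continuous kappa c fs lambda M N K mic x :
  (forall t, continuity_pt kappa t) ->
  continuous (relaxed_objective kappa c fs lambda M N K mic x).
Proof.
move=> kc; rewrite /relaxed_objective /sqerr /relaxed_signal /loc /amp.
continuity_R.
Qed.

Lemma relaxed_minimizer_exists kappa c fs lambda M N K mic x (lo hi : param -> R) :
  (forall t, continuity_pt kappa t) ->
  (exists f0, (forall i, lo i <= f0 i <= hi i) /\ relaxed_feasible c fs M N K mic f0) ->
  exists p, ((forall i, lo i <= p i <= hi i) /\ relaxed_feasible c fs M N K mic p) /\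
    forall q, (forall i, lo i <= q i <= hi i) -> relaxed_feasible c fs M N K mic q ->
      relaxed_objective kappa c fs lambda M N K mic x p <=
      relaxed_objective kappa c fs lambda M N K mic x q.
Proof.
move=> kc; apply: box_min_exists.
- exact: relaxed_feasible_closed.
- exact: relaxed_objective_continuous.
Qed.

End Compactness.

Theorem theorem2 (c fs lambda : R) (M N K : nat) (mic : nat -> pt3)
    (x : nat -> nat -> R) (kappa : R -> R)
    (Hc : 0 < c) (Hfs : 0 < fs) (HM : (1 <= M)%nat) (HN : (1 <= N)%nat)
    (HK : (1 <= K)%nat) (Hlam : 0 < lambda)
    (Hkc : forall t, continuity_pt kappa t)
    (Hkb : exists B, forall t, Rabs (kappa t) <= B)
    (Hk0 : 0 < kappa 0)
    (HC : exists r0, inC c fs M N mic r0)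
    (Hcase :
       (phi_val kappa c fs N < 0 /\
          forall m, (m < M)%nat ->
            mu kappa fs N x m <= phi_val kappa c fs N / (2 * lambda) * sqnorm_x M N x)
       \/
       (0 <= phi_val kappa c fs N /\
          forall m, (m < M)%nat -> mu kappa fs N x m <= 0)) :
  exists (a : nat -> R) (r : nat -> pt3),
    is_solution kappa c fs lambda M N K mic x a r.
Proof.
  destruct Hkb as [B HB]. destruct HC as [r0 Hr0].
  destruct (kappa_ge_half_near_0 kappa c Hc (Hkc 0) Hk0) as [del [Hdel Hkdel]].
  destruct (relaxed_minimizer_exists kappa c fs lambda M N K mic x (box_lo c fs N mic)
              (box_hi kappa c fs lambda M N K mic x B del) Hkc) as [p [[Hbox Hp] Hmin]].
  { destruct (lift_zero_amp kappa c fs lambda M N K mic x Hc Hlam B del HM HN Hfs Hk0 HB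
                Hdel Hkdel r0 Hr0) as [Hbox0 [Hp0 _]].
    now exists (lift M K mic (fun _ => 0) (fun _ => r0)). }
  exists (amp p), (recover_pos p r0).
  apply (solution_of_relaxed_minimizer kappa c fs lambda M N K mic x Hc Hlam B del HM HN Hfs
           Hk0 HB Hdel Hkdel (phi_val kappa c fs N)); try assumption.
  exact (phi_val_le kappa c fs B N Hc HN Hk0 Hkc HB).
Qed.
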